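(* Let $1\le m\le n/2$, $\delta>0$ and $s:=m-\delta^2$. If $$s\in\Big]0,\ \frac{m^2}{n}+\frac{2(n-m)^2}{n(n-1)(n+2)}\Big[,$$ then every $\delta$-code $C\subset\mathcal G_{m,n}$ satisfies $$|C|\le\frac nm\cdot\frac{m-s}{-s+\frac{m^2}{n}+\frac{2(n-m)^2}{n(n-1)(n+2)}}.$$
   Context: $\mathcal G_{m,n}$ is the set of $m$-dimensional linear subspaces of $\mathbb R^n$. For $p,q\in\mathcal G_{m,n}$ with principal angles $\theta_1,\dots,\theta_m\in[0,\pi/2]$ (defined recursively: $\theta_1$ is the minimal angle between a line of $p$ and a line of $q$, the rest are the principal angles of the orthogonal complements of these lines in $p$ and $q$), the chordal distance is $d_c(p,q)=\sqrt{\sum_i\sin^2\theta_i}$. A $\delta$-code is a finite $C\subset\mathcal G_{m,n}$ with $d_c(p,q)\ge\delta$ for all distinct $p,q\in C$. *)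

From HB Require Import structures.
From mathcomp Require Import all_boot all_order all_algebra.
From mathcomp Require Import all_classical all_reals.
From mathcomp Require Import topology normedtype sequences exp trigo.

Set Implicit Arguments.
Unset Strict Implicit.
Unset Printing Implicit Defensive.

Import Order.TTheory GRing.Theory Num.Theory.
Local Open Scope ring_scope.

Section Grassmann.
Variables (R : realType) (n : nat).

(* A linear subspace of R^n is represented by a square matrix whose
   row space is the subspace (mxalgebra). Vectors are row vectors. *)

Definition dotv (u v : 'rV[R]_n) : R := (u *m v^T) 0 0.

Definition unitv (u : 'rV[R]_n) : Prop := dotv u u = 1.

Definition grass (m : nat) (p : 'M[R]_n) : Prop := \rank p = m.

Definition perp_in (p : 'M[R]_n) (u : 'rV[R]_n) : 'M[R]_n :=
  (p :&: kermx u^T)%MS.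

Inductive principal_angles : 'M[R]_n -> 'M[R]_n -> seq R -> Prop :=
| pa_nil p q : \rank p = 0%N -> \rank q = 0%N -> principal_angles p q [::]
| pa_cons p q (u v : 'rV[R]_n) th ths :
    (u <= p)%MS -> (v <= q)%MS -> unitv u -> unitv v ->
    0 <= th <= pi / 2 ->
    cos th = dotv u v ->
    (forall u' v' : 'rV[R]_n, (u' <= p)%MS -> (v' <= q)%MS ->
        unitv u' -> unitv v' -> `|dotv u' v'| <= cos th) ->
    principal_angles (perp_in p u) (perp_in q v) ths ->
    principal_angles p q (th :: ths).

(* Chordal distance d_c(p,q) = sqrt (sum_i sin^2 th_i) where th_i are the
   principal angles of p and q (chosen by description; they are unique). *)
Definition chordal_dist (p q : 'M[R]_n) : R :=
  let ths := xget [::] [set ths | principal_angles p q ths] in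
  Num.sqrt (\sum_(t <- ths) sin t ^+ 2).

Definition delta_code (m k : nat) (delta : R) (C : 'I_k -> 'M[R]_n) : Prop :=
  (forall i, grass m (C i)) /\
  (forall i j, i != j -> ~~ (C i == C j)%MS) /\
  (forall i j, i != j -> delta <= chordal_dist (C i) (C j)).

End Grassmann.

From HB Require Import structures.
From mathcomp Require Import all_boot all_order all_algebra.
From mathcomp Require Import all_classical all_reals.
From mathcomp Require Import topology normedtype sequences exp trigo.
From mathcomp Require Import ring lra.
Import Order.TTheory GRing.Theory Num.Theory.
Local Open Scope ring_scope.

Set Implicit Arguments.
Unset Strict Implicit.
Unset Printing Implicit Defensive.

(* Let P_i be the orthogonal projections onto the members of the code.  They
   have trace m, and for i <> j, tr (P_i P_j) is the sum of the squared cosines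
   of the principal angles, i.e. m - d_c^2, which lies in [0, s].  Delsarte's
   linear programming method with F(t) = t (t - s) bounds the double sum
   \sum_(i,j) F(tr (P_i P_j)) by k m (m - s), as the off-diagonal terms are
   nonpositive.  Writing P_i = Y_i + (m/n) I with Y_i traceless, the same sum
   equals \sum_(i,j) <Y_i,Y_j>^2 + (2 m^2/n - s) |\sum_i Y_i|^2
   + k^2 (m^2/n) (m^2/n - s).  Since Y_i^2 = (1 - 2m/n) Y_i + (m/n - m^2/n^2) I,
   projecting the tensor \sum_i Y_i (x) Y_i, whose squared norm is
   \sum_(i,j) <Y_i,Y_j>^2, onto the traceless symmetric matrices and onto
   (\sum_i Y_i) (x) I bounds that sum from below; comparing the two bounds
   gives k (m^2/n) (A - s) <= m (m - s), where A is the threshold for s. *)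

(** * Principal angles and orthogonal projections *)

Section InnerProduct.
Variables (R : realType) (n : nat).
Implicit Types (u v w x : 'rV[R]_n) (p : 'M[R]_n).

Lemma dotvE u v : dotv u v = \sum_j u 0 j * v 0 j.
Proof. by rewrite /dotv !mxE; apply: eq_bigr => j _; rewrite mxE. Qed.

Lemma dotvC u v : dotv u v = dotv v u.
Proof. by rewrite !dotvE; apply: eq_bigr => j _; apply: mulrC. Qed.

Lemma dotvDl u w v : dotv (u + w) v = dotv u v + dotv w v.
Proof. by rewrite /dotv mulmxDl mxE. Qed.

Lemma dotvZl a u v : dotv (a *: u) v = a * dotv u v.
Proof. by rewrite /dotv -scalemxAl mxE. Qed.

Lemma dotvDr u w v : dotv v (u + w) = dotv v u + dotv v w.
Proof. by rewrite dotvC dotvDl !(dotvC v). Qed.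

Lemma dotvZr a u v : dotv v (a *: u) = a * dotv v u.
Proof. by rewrite dotvC dotvZl dotvC. Qed.

Lemma dotv0l v : dotv 0 v = 0.
Proof. by rewrite /dotv mul0mx mxE. Qed.

Lemma dotvv_ge0 u : 0 <= dotv u u.
Proof. by rewrite dotvE; apply: sumr_ge0 => j _; rewrite -expr2 sqr_ge0. Qed.

Lemma dotvv_eq0 u : dotv u u = 0 -> u = 0.
Proof.
rewrite dotvE => /eqP; rewrite psumr_eq0 => [/allP uu0|j _]; last first.
  by rewrite -expr2 sqr_ge0.
apply/rowP => j; rewrite mxE.
by have := uu0 j (mem_index_enum j); rewrite mulf_eq0 orbb => /eqP.
Qed.

Lemma unitv_mul_tr u : unitv u -> u *m u^T = 1%:M.
Proof. by rewrite /unitv /dotv => uu1; rewrite [LHS]mx11_scalar uu1. Qed.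

Lemma perp_inP p u w : (w <= perp_in p u)%MS -> (w <= p)%MS /\ dotv w u = 0.
Proof.
rewrite /perp_in sub_capmx sub_kermx => /andP[-> /eqP wu]; split => //.
by rewrite /dotv wu mxE.
Qed.

Lemma mul_tr_eq0 s (U : 'M[R]_(s, n)) v p :
  (U <= p)%MS -> (forall w, (w <= p)%MS -> dotv w v = 0) -> U *m v^T = 0.
Proof.
move=> Up pv; apply/matrixP => i j; rewrite (ord1 j) [RHS]mxE.
have := pv (row i U) (submx_trans (row_sub i U) Up).
by rewrite /dotv -row_mul mxE.
Qed.

End InnerProduct.

Section PrincipalAngles.
Variables (R : realType) (n : nat).
Implicit Types (u v w x : 'rV[R]_n) (p q : 'M[R]_n).

Definition max_dotv p q c := forall u' v', (u' <= p)%MS -> (v' <= q)%MS ->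
  unitv u' -> unitv v' -> `|dotv u' v'| <= c.

Lemma max_dotvC p q c : max_dotv p q c -> max_dotv q p c.
Proof. by move=> pq u v uq vp uu vu; rewrite dotvC; apply: pq. Qed.

Lemma max_dotv_sqr p q v c : (v <= q)%MS -> unitv v -> 0 <= c ->
  max_dotv p q c -> forall x, (x <= p)%MS -> dotv x v ^+ 2 <= c ^+ 2 * dotv x x.
Proof.
move=> vq vu c0 pq x xp.
have [/dotvv_eq0 -> | xx_neq0] := eqVneq (dotv x x) 0.
  by rewrite dotv0l expr0n /= mulr_ge0 ?sqr_ge0 ?dotvv_ge0.
have xx_gt0 : 0 < dotv x x by rewrite lt_def xx_neq0 dotvv_ge0.
set r := Num.sqrt (dotv x x).
have r_gt0 : 0 < r by rewrite sqrtr_gt0.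
have xu : unitv (r^-1 *: x).
  rewrite /unitv dotvZl dotvZr mulrA -expr2 exprVn sqr_sqrtr ?dotvv_ge0 //.
  by rewrite mulVf.
have := pq _ _ (scalemx_sub _ xp) vq xu vu.
rewrite dotvZl normrM gtr0_norm ?invr_gt0 // mulrC ler_pdivrMr // => xv_le.
rewrite -(sqr_sqrtr (dotvv_ge0 x)) -exprMn -real_normK ?num_real //.
by rewrite ler_sqr ?nnegrE ?mulr_ge0 ?sqrtr_ge0.
Qed.

(* Perturbing the maximizer u to [c u + t w], t := <w,v> / (|w|^2 + 1), would
   otherwise increase the ratio [<x,v>^2 / <x,x>] beyond [c^2]. *)
Lemma max_dotv_orth p q u v c : (u <= p)%MS -> (v <= q)%MS -> unitv u -> unitv v ->
  0 <= c -> c = dotv u v -> max_dotv p q c ->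
  forall w, (w <= p)%MS -> dotv w u = 0 -> dotv w v = 0.
Proof.
move=> up vq uu vu c0 ce pq w wp wu.
set b := dotv w v; set ww := dotv w w.
have ww0 : 0 <= ww := dotvv_ge0 w.
set t := b / (ww + 1).
have bE : b = t * (ww + 1) by rewrite /t divfK // gt_eqF // ltr_wpDl.
have := max_dotv_sqr vq vu c0 pq (addmx_sub (scalemx_sub c up) (scalemx_sub t wp)).
rewrite !(dotvDl, dotvDr, dotvZl, dotvZr) -ce (dotvC u w) wu uu -/ww -/b bE => ineq.
have t4 : t ^+ 4 * (ww + 1) ^+ 2 + c ^+ 2 * t ^+ 2 * (ww + 2) <= 0.
  rewrite -oppr_ge0; move: ineq; rewrite -subr_ge0 => /le_trans; apply.
  by rewrite le_eqVlt; apply/orP; left; apply/eqP; ring.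
have /eqP : t ^+ 4 * (ww + 1) ^+ 2 = 0.
  apply/le_anti; rewrite mulr_ge0 ?exprn_even_ge0 ?sqr_ge0 // andbT.
  apply: le_trans t4; rewrite lerDl; apply: mulr_ge0; last by rewrite addr_ge0.
  by rewrite mulr_ge0 ?sqr_ge0.
have ww1_neq0 : ww + 1 != 0 by rewrite gt_eqF ?ltr_wpDl.
by rewrite mulf_eq0 sqrf_eq0 (negbTE ww1_neq0) orbF expf_eq0 => /andP[_ /eqP ->]; rewrite mul0r.
Qed.

Definition orthonormal s (U : 'M[R]_(s, n)) := U *m U^T = 1%:M.

Lemma orthonormal_col_mx s p u (U : 'M[R]_(s, n)) :
  (u <= p)%MS -> unitv u -> orthonormal U -> (U == perp_in p u)%MS ->
  orthonormal (col_mx u U) /\ (col_mx u U == p)%MS.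
Proof.
move=> up uu UU /andP[Upu puU].
have /andP[Up /eqP Uu] : (U <= p)%MS && (U *m u^T == 0).
  by move: Upu; rewrite /perp_in sub_capmx sub_kermx.
split.
  rewrite /orthonormal tr_col_mx mul_col_mx !mul_mx_row unitv_mul_tr // UU Uu.
  have -> : u *m U^T = 0 by rewrite -(trmxK u) -trmx_mul Uu trmx0.
  by rewrite (scalar_mx_block 1 s 1).
apply/andP; split; first by rewrite col_mx_sub up Up.
rewrite -addsmxE.
have -> : p = p *m u^T *m u + (p - p *m u^T *m u) by rewrite addrC subrK.
apply: addmx_sub_adds; first exact: submxMl.
apply: submx_trans puU.
rewrite /perp_in sub_capmx sub_kermx addmx_sub ?eqmx_opp ?(submx_trans (submxMl _ _) up) //=.
by rewrite mulmxBl -!mulmxA unitv_mul_tr // mulmx1 subrr.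
Qed.

Lemma mxtrace_block_diag s (a : R) (M : 'M[R]_s) :
  \tr (block_mx (a%:M : 'M_1) 0 0 M *m (block_mx (a%:M : 'M_1) 0 0 M)^T) =
  a ^+ 2 + \tr (M *m M^T).
Proof.
rewrite tr_block_mx !trmx0 tr_scalar_mx mulmx_block !mulmx0 !mul0mx !addr0 !add0r.
by rewrite mxtrace_block -scalar_mxM mxtrace_scalar expr2.
Qed.

(* In these bases the cross Gram matrix [U V^T] is diagonal, with the cosines
   of the principal angles on the diagonal. *)
Lemma principal_angles_bases p q ths : principal_angles p q ths ->
  exists U V : 'M[R]_(size ths, n), [/\ orthonormal U, orthonormal V,
    (U == p)%MS, (V == q)%MS &
    \tr (U *m V^T *m (U *m V^T)^T) = \sum_(t <- ths) cos t ^+ 2].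
Proof.
elim=> {p q ths} [p q p0 q0 | p q u v th ths up vq uu vu th_range cosE pq _].
  exists 0, 0; rewrite big_nil /orthonormal /= [1%:M]flatmx0 mul0mx.
  move/eqP: p0; move/eqP: q0; rewrite !mxrank_eq0 => /eqP-> /eqP->.
  by split; rewrite // ?/eqmx ?sub0mx ?mul0mx ?mxtrace0.
move=> [U [V [UU VV Up Vq trUV]]].
have cos_ge0 : 0 <= cos th.
  apply: cos_ge0_pihalf; case/andP: th_range => th0 ->; rewrite andbT.
  by apply: le_trans th0; rewrite oppr_le0 divr_ge0 ?pi_ge0.
have [UU' Up'] := orthonormal_col_mx up uu UU Up.
have [VV' Vq'] := orthonormal_col_mx vq vu VV Vq.
exists (col_mx u U), (col_mx v V); split => //.
have Uv : U *m v^T = 0.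
  case/andP: Up => /mul_tr_eq0 -> // w /perp_inP [wp wu].
  exact: max_dotv_orth up vq uu vu cos_ge0 cosE pq w wp wu.
have uV : u *m V^T = 0.
  suff Vu : V *m u^T = 0 by rewrite -(trmxK u) -trmx_mul Vu trmx0.
  case/andP: Vq => /mul_tr_eq0 -> // w /perp_inP [wq wv].
  rewrite dotvC in cosE.
  exact: max_dotv_orth vq up vu uu cos_ge0 cosE (max_dotvC pq) w wq wv.
have -> : col_mx u U *m (col_mx v V)^T = block_mx (cos th)%:M 0 0 (U *m V^T).
  rewrite tr_col_mx mul_col_mx !mul_mx_row uV Uv.
  by rewrite [u *m v^T]mx11_scalar -/(dotv u v) -cosE.
by rewrite big_cons -trUV mxtrace_block_diag.
Qed.

Definition orthoproj p (P : 'M[R]_n) := [/\ P^T = P, (P <= p)%MS & p *m P = p].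

Lemma orthoproj_uniq p P Q : orthoproj p P -> orthoproj p Q -> P = Q.
Proof.
move=> [PT Pp pP] [QT Qp pQ].
have PQ : P *m Q = P by case/submxP: Pp => D ->; rewrite -mulmxA pQ.
have QP : Q *m P = Q by case/submxP: Qp => D ->; rewrite -mulmxA pP.
by rewrite -PT -PQ trmx_mul PT QT QP.
Qed.

Lemma orthoproj_idem p P : orthoproj p P -> P *m P = P.
Proof. by move=> [_ Pp pP]; case/submxP: (Pp) => D PE; rewrite {1}PE -mulmxA pP -PE. Qed.

Lemma orthonormal_orthoproj s p (U : 'M[R]_(s, n)) : orthonormal U -> (U == p)%MS ->
  [/\ orthoproj p (U^T *m U), \tr (U^T *m U) = s%:R & \rank p = s].
Proof.
move=> UU /andP[Up pU]; split.
- split; first by rewrite trmx_mul trmxK.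
    exact: submx_trans (submxMl _ _) Up.
  by case/submxP: pU => D ->; rewrite -!mulmxA (mulmxA U) UU mul1mx.
- by rewrite mxtrace_mulC UU mxtrace1.
- rewrite -(@eqmx_rank _ _ _ _ U p); last by rewrite /eqmx Up pU.
  apply/eqP; rewrite eqn_leq rank_leq_row /=.
  by rewrite -{1}(mxrank1 R s) -UU mxrankM_maxl.
Qed.

Lemma sum_cos2 (ths : seq R) :
  \sum_(t <- ths) cos t ^+ 2 = (size ths)%:R - \sum_(t <- ths) sin t ^+ 2.
Proof.
elim: ths => [|t ths IH]; first by rewrite !big_nil subr0.
by rewrite !big_cons IH sin2cos2 /= mulrS; ring.
Qed.

Lemma principal_angles_orthoproj p q ths : principal_angles p q ths ->
  exists P Q, [/\ orthoproj p P, orthoproj q Q, \tr P = (\rank p)%:R,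
    \tr (P *m Q) = (\rank p)%:R - \sum_(t <- ths) sin t ^+ 2
    & 0 <= \tr (P *m Q)].
Proof.
move=> /principal_angles_bases [U [V [UU VV Up Vq trUV]]].
have [PU trU rkp] := orthonormal_orthoproj UU Up.
have [PV _ _] := orthonormal_orthoproj VV Vq.
have trPQ : \tr (U^T *m U *m (V^T *m V)) = \sum_(t <- ths) cos t ^+ 2.
  by rewrite -trUV -mulmxA mxtrace_mulC trmx_mul trmxK !mulmxA.
exists (U^T *m U), (V^T *m V); rewrite trPQ rkp trU -sum_cos2.
by split => //; apply: sumr_ge0 => t _; apply: sqr_ge0.
Qed.

(* [chordal_dist] reads the angles off [xget], whose junk value [[::]] gives
   distance 0; a positive distance therefore certifies that the angles exist. *)
Lemma chordal_dist_gt0 p q : 0 < chordal_dist p q ->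
  exists2 ths, principal_angles p q ths &
    chordal_dist p q ^+ 2 = \sum_(t <- ths) sin t ^+ 2.
Proof.
rewrite /chordal_dist; set ths := xget _ _ => d_gt0.
have sin2_ge0 (l : seq R) : 0 <= \sum_(t <- l) sin t ^+ 2.
  by apply: sumr_ge0 => t _; apply: sqr_ge0.
exists ths; last by rewrite sqr_sqrtr.
have [[l pql]|no_angles] := pselect (exists l, principal_angles p q l).
  by apply: xgetPex; exists l.
move: d_gt0; rewrite /ths xgetPN => [|l pql]; last by apply: no_angles; exists l.
by rewrite big_nil sqrtr0 ltxx.
Qed.

Lemma chordal_dist_orthoproj m delta p q : \rank p = m -> 0 < delta ->
  delta <= chordal_dist p q ->
  exists P Q, [/\ orthoproj p P, orthoproj q Q, \tr P = m%:R
    & 0 <= \tr (P *m Q) <= m%:R - delta ^+ 2].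
Proof.
move=> rkp delta_gt0 delta_le.
have [ths pqths dE] := chordal_dist_gt0 (lt_le_trans delta_gt0 delta_le).
have [P [Q [pP qQ trP trPQ trPQ_ge0]]] := principal_angles_orthoproj pqths.
exists P, Q; split => //; first by rewrite trP rkp.
rewrite trPQ_ge0 trPQ rkp -dE lerD2l lerN2 /=.
by rewrite ler_sqr ?nnegrE ?(ltW delta_gt0) ?(le_trans (ltW delta_gt0)).
Qed.

End PrincipalAngles.

Lemma delta_code_orthoproj (R : realType) (n m k : nat) (delta : R)
    (C : 'I_k -> 'M[R]_n) :
  (2 <= k)%N -> 0 < delta -> delta_code m delta C ->
  exists P : 'I_k -> 'M[R]_n, [/\ forall i, orthoproj (C i) (P i),
    forall i, \tr (P i) = m%:R &
    forall i j, i != j -> 0 <= \tr (P i *m P j) <= m%:R - delta ^+ 2].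
Proof.
move=> k_ge2 delta_gt0 [Cm [_ Cdelta]].
have partner (i : 'I_k) : exists j, i != j.
  pose i0 := Ordinal (ltnW k_ge2); pose i1 := Ordinal k_ge2.
  by have [->|] := eqVneq i i0; [exists i1 | exists i0].
have CP_ex (i : 'I_k) : exists P, orthoproj (C i) P /\ \tr P = m%:R.
  have [j ij] := partner i.
  have [P [_ [CiP _ trP _]]] := chordal_dist_orthoproj (Cm i) delta_gt0 (Cdelta i j ij).
  by exists P.
have [P CP] := choice CP_ex.
exists P; split => [i|i|i j ij]; try by case: (CP i).
have [P' [Q' [CP' CQ' _ trPQ]]] := chordal_dist_orthoproj (Cm i) delta_gt0 (Cdelta i j ij).
by rewrite -(orthoproj_uniq CP' (CP i).1) -(orthoproj_uniq CQ' (CP j).1).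
Qed.

(** * A lower bound for sums of squared Frobenius products *)

Section FiniteSums.
Variable R : comRingType.

Lemma sum_pair (I J : finType) (F : I * J -> R) : \sum_x F x = \sum_a \sum_b F (a, b).
Proof. by rewrite pair_bigA; apply: eq_bigr => -[a b]. Qed.

Lemma sum_delta_l (I : finType) (i : I) (F : I -> R) : \sum_j F j * (i == j)%:R = F i.
Proof.
rewrite (bigD1 i) //= eqxx mulr1 big1 ?addr0 // => j ji.
by rewrite eq_sym (negbTE ji) mulr0.
Qed.

Lemma sum_delta_r (I : finType) (i : I) (F : I -> R) : \sum_j F j * (j == i)%:R = F i.
Proof. by rewrite -[RHS](sum_delta_l i); apply: eq_bigr => j _; rewrite eq_sym. Qed.

Lemma sum_delta (I : finType) (i : I) : \sum_j ((i == j)%:R : R) = 1.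
Proof. by rewrite -[RHS](sum_delta_l i (fun=> 1)); apply: eq_bigr => j _; rewrite mul1r. Qed.

Lemma sqr_sum (I : finType) (F : I -> R) : (\sum_i F i) ^+ 2 = \sum_i \sum_j F i * F j.
Proof. by rewrite expr2 mulr_suml; apply: eq_bigr => i _; rewrite mulr_sumr. Qed.

Lemma sum_gram (I J : finType) (y : I -> J -> R) :
  \sum_i \sum_j \sum_x y i x * y j x = \sum_x (\sum_i y i x) ^+ 2.
Proof.
under eq_bigr do rewrite exchange_big.
by rewrite exchange_big; apply: eq_bigr => x _; rewrite sqr_sum.
Qed.

Lemma sum_sqr_gram_tr (I J : finType) (y : I -> J -> R) :
  \sum_x \sum_x' (\sum_i y i x * y i x') ^+ 2 =
  \sum_i \sum_j (\sum_x y i x * y j x) ^+ 2.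
Proof.
under eq_bigr do under eq_bigr do rewrite sqr_sum.
under [RHS]eq_bigr do under eq_bigr do rewrite sqr_sum.
under eq_bigr do rewrite exchange_big.
under eq_bigr do under eq_bigr do rewrite exchange_big.
rewrite exchange_big; apply: eq_bigr => i _.
rewrite exchange_big; apply: eq_bigr => j _.
by apply: eq_bigr => x _; apply: eq_bigr => x' _; ring.
Qed.

End FiniteSums.

Section FunctionDot.
Variables (R : realFieldType) (I : finType).

Definition dotf (f g : I -> R) := \sum_p f p * g p.

Lemma dotfC f g : dotf f g = dotf g f.
Proof. by apply: eq_bigr => p _; rewrite mulrC. Qed.

Lemma dotf_comb4 (c1 c2 c3 c4 : R) (f1 f2 f3 f4 g : I -> R) :
  dotf (fun p => c1 * f1 p + c2 * f2 p + c3 * f3 p + c4 * f4 p) g =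
  c1 * dotf f1 g + c2 * dotf f2 g + c3 * dotf f3 g + c4 * dotf f4 g.
Proof. by rewrite /dotf !mulr_sumr -!big_split /=; apply: eq_bigr => p _; ring. Qed.

Lemma dotf_bessel (z x : I -> R) : 2 * dotf z x - dotf x x <= dotf z z.
Proof.
have : 0 <= \sum_p (z p - x p) ^+ 2 by apply: sumr_ge0 => p _; apply: sqr_ge0.
have -> : \sum_p (z p - x p) ^+ 2 = dotf z z - 2 * dotf z x + dotf x x.
  by rewrite /dotf mulr_sumr -sumrB -big_split /=; apply: eq_bigr => p _; ring.
lra.
Qed.

End FunctionDot.

Definition frob (R : ringType) (n : nat) (A B : 'M[R]_n) := \sum_a \sum_b A a b * B a b.

Section GramBound.
Variables (R : realFieldType) (n k : nat) (Y : 'I_k -> 'M[R]_n) (al be : R).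
Hypothesis Ysym : forall i, (Y i)^T = Y i.
Hypothesis Ytr : forall i, \tr (Y i) = 0.
Hypothesis Ysqr : forall i, Y i *m Y i = al *: Y i + be%:M.

Local Notation T := ('I_n * 'I_n)%type.

Let YsymE i a b : Y i a b = Y i b a.
Proof. by rewrite -[Y i in LHS]Ysym mxE. Qed.

Let YsqrE i a c : \sum_b Y i a b * Y i c b = al * Y i a c + be * (a == c)%:R.
Proof.
move/matrixP: (Ysqr i) => /(_ a c); rewrite !mxE mulr_natr => <-.
by apply: eq_bigr => b _; rewrite (YsymE i c b).
Qed.

Definition Ysum := \sum_i Y i.

Let YsumE a c : Ysum a c = \sum_i Y i a c.
Proof. by rewrite /Ysum summxE. Qed.

Let trYsum : \sum_a Ysum a a = 0.
Proof.
under eq_bigr do rewrite YsumE.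
by rewrite exchange_big big1 // => i _; apply: Ytr.
Qed.

(* [z = \sum_i Y_i (x) Y_i], and the four 4-tensors onto whose span it is
   projected. *)
Let z (p : T * T) := \sum_i Y i p.1.1 p.1.2 * Y i p.2.1 p.2.2.
Let f1 (p : T * T) : R := (p.1 == p.2)%:R.
Let sw (x : T) : T := (x.2, x.1).
Let f2 (p : T * T) : R := (p.1 == sw p.2)%:R.
Let f3 (p : T * T) : R := (p.1.1 == p.1.2)%:R * (p.2.1 == p.2.2)%:R.
Let f4 (p : T * T) : R := Ysum p.1.1 p.2.1 * (p.1.2 == p.2.2)%:R.

Let Q := \sum_i frob (Y i) (Y i).
Let N := frob Ysum Ysum.

Let dotfP (f g : T * T -> R) : dotf f g = \sum_x \sum_y f (x, y) * g (x, y).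
Proof. by rewrite /dotf sum_pair. Qed.

Let swE x y : (x == sw y) = (sw x == y).
Proof. by case: x y => a b [c d]; rewrite /sw /= !xpair_eqE andbC. Qed.

Let sum1n : \sum_(a : 'I_n) (1 : R) = n%:R.
Proof. by rewrite sumr_const card_ord. Qed.

Let sum1T : \sum_(x : T) (1 : R) = n%:R * n%:R.
Proof. by rewrite sumr_const card_prod !card_ord natrM. Qed.

Let sum_diag_sw : \sum_(x : T) ((x == sw x)%:R : R) = n%:R.
Proof.
rewrite sum_pair -[RHS]sum1n; apply: eq_bigr => a _.
by rewrite -[RHS](sum_delta _ a); apply: eq_bigr => b _; rewrite /sw /= xpair_eqE (eq_sym b a) andbb.
Qed.

Let sum_diag : \sum_(x : T) ((x.1 == x.2)%:R * (x.1 == x.2)%:R : R) = n%:R.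
Proof.
rewrite sum_pair -[RHS]sum1n; apply: eq_bigr => a _.
by rewrite -[RHS](sum_delta _ a); apply: eq_bigr => b _; rewrite /= -natrM mulnb andbb.
Qed.

Let dot11 : dotf f1 f1 = n%:R * n%:R.
Proof. by rewrite dotfP -sum1T; apply: eq_bigr => x _; rewrite /f1 /= sum_delta_l eqxx. Qed.

Let dot12 : dotf f1 f2 = n%:R.
Proof.
rewrite dotfP -sum_diag_sw; apply: eq_bigr => x _.
by under eq_bigr do rewrite mulrC; rewrite /f1 /f2 /= sum_delta_l.
Qed.

Let dot22 : dotf f2 f2 = n%:R * n%:R.
Proof.
rewrite dotfP -sum1T; apply: eq_bigr => x _.
by under eq_bigr do rewrite /f2 /= swE; rewrite sum_delta_l eqxx.
Qed.

Let dot13 : dotf f1 f3 = n%:R.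
Proof.
rewrite dotfP -sum_diag; apply: eq_bigr => x _.
by under eq_bigr do rewrite mulrC; rewrite /f1 /f3 /= sum_delta_l.
Qed.

Let dot23 : dotf f2 f3 = n%:R.
Proof.
rewrite dotfP -sum_diag; apply: eq_bigr => x _.
under eq_bigr do rewrite mulrC /f2 /= swE; rewrite /f3 /= sum_delta_l /=.
by rewrite (eq_sym x.2) mulrC.
Qed.

Let dot33 : dotf f3 f3 = n%:R * n%:R.
Proof.
rewrite dotfP -sum_diag mulr_suml; apply: eq_bigr => x _.
by rewrite mulr_sumr; apply: eq_bigr => y _; rewrite /f3 /=; ring.
Qed.

Let dot14 : dotf f1 f4 = 0.
Proof.
rewrite dotfP.
under eq_bigr do (under eq_bigr do rewrite mulrC; rewrite /f1 /f4 /= sum_delta_l eqxx mulr1).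
by rewrite sum_pair exchange_big /= big1 // => b _; apply: trYsum.
Qed.

Let dot24 : dotf f2 f4 = 0.
Proof.
rewrite dotfP.
under eq_bigr do (under eq_bigr do rewrite mulrC /f2 /= swE; rewrite /f4 /= sum_delta_l /=).
by rewrite sum_pair -[RHS]trYsum; apply: eq_bigr => a _ /=; rewrite sum_delta_r.
Qed.

Let dot34 : dotf f3 f4 = 0.
Proof.
rewrite dotfP sum_pair -[RHS]trYsum; apply: eq_bigr => a _.
rewrite -[RHS](sum_delta_l a (fun b => Ysum a b)).
apply: eq_bigr => b _; rewrite sum_pair.
rewrite -[RHS](sum_delta_r b (fun c => Ysum a c * (a == b)%:R)) /=.
apply: eq_bigr => c _; rewrite /f3 /f4 /=.
under eq_bigr do rewrite mulrA.
by rewrite sum_delta_l; ring.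
Qed.

Let dot44 : dotf f4 f4 = n%:R * N.
Proof.
rewrite dotfP sum_pair exchange_big /= -[in RHS]sum1n mulr_suml; apply: eq_bigr => b _.
rewrite mul1r /N /frob; apply: eq_bigr => a _.
rewrite sum_pair; apply: eq_bigr => c _; rewrite /f4 /=.
transitivity (\sum_d Ysum a c ^+ 2 * (b == d)%:R * (b == d)%:R).
  by apply: eq_bigr => d _; rewrite expr2; ring.
by rewrite sum_delta_l eqxx mulr1 expr2.
Qed.

Let dotz1 : dotf z f1 = Q.
Proof.
rewrite /dotf sum_pair /=; under eq_bigr do rewrite /f1 /= sum_delta_l.
rewrite /z /= exchange_big /=; apply: eq_bigr => i _.
by rewrite sum_pair.
Qed.

Let dotz2 : dotf z f2 = Q.
Proof.
rewrite dotfP.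
under eq_bigr do (under eq_bigr do rewrite /f2 /= swE; rewrite sum_delta_l).
rewrite /z /= exchange_big; apply: eq_bigr => i _.
rewrite sum_pair; apply: eq_bigr => a _; apply: eq_bigr => b _.
by rewrite /= (YsymE i b a).
Qed.

Let dotz3 : dotf z f3 = 0.
Proof.
rewrite dotfP big1 // => x _.
rewrite /z /f3 /=.
under eq_bigr do rewrite mulr_suml.
rewrite exchange_big big1 // => i _.
have trYi : \sum_(y : T) Y i y.1 y.2 * (y.1 == y.2)%:R = 0.
  by rewrite sum_pair -[RHS](Ytr i); apply: eq_bigr => a _; rewrite sum_delta_l.
transitivity (Y i x.1 x.2 * (x.1 == x.2)%:R * \sum_(y : T) Y i y.1 y.2 * (y.1 == y.2)%:R);
  last by rewrite trYi mulr0.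
by rewrite mulr_sumr; apply: eq_bigr => y _; ring.
Qed.

Let dotz4 : dotf z f4 = al * N.
Proof.
rewrite dotfP sum_pair.
transitivity (\sum_a \sum_c Ysum a c * (al * Ysum a c + be * (a == c)%:R *+ k)).
  apply: eq_bigr => a _.
  transitivity (\sum_b \sum_c (\sum_i Y i a b * Y i c b) * Ysum a c).
    apply: eq_bigr => b _; rewrite sum_pair; apply: eq_bigr => c _.
    rewrite /z /f4 /=; under eq_bigr do rewrite mulrA.
    by rewrite sum_delta_l.
  rewrite exchange_big; apply: eq_bigr => c _.
  rewrite -mulr_suml exchange_big /= mulrC; congr (_ * _).
  under eq_bigr do rewrite YsqrE.
  by rewrite big_split /= -mulr_sumr -YsumE sumr_const card_ord.
under eq_bigr do under eq_bigr do rewrite mulrDr.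
under eq_bigr do rewrite big_split /=.
rewrite big_split /=.
have -> : \sum_a \sum_c Ysum a c * (be * (a == c)%:R *+ k) = 0.
  transitivity ((\sum_a Ysum a a) * (be *+ k)); last by rewrite trYsum mul0r.
  rewrite mulr_suml; apply: eq_bigr => a _.
  transitivity (\sum_c Ysum a c * (be *+ k) * (a == c)%:R).
    by apply: eq_bigr => c _; rewrite !mulrnAr mulrnAl !mulr1 mulrnAC.
  by rewrite sum_delta_l.
rewrite addr0 /N /frob mulr_sumr; apply: eq_bigr => a _.
by rewrite mulr_sumr; apply: eq_bigr => c _; ring.
Qed.

Let dotzz : dotf z z = \sum_i \sum_j frob (Y i) (Y j) ^+ 2.
Proof.
rewrite dotfP /z /= (sum_sqr_gram_tr (fun i (x : T) => Y i x.1 x.2)).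
by apply: eq_bigr => i _; apply: eq_bigr => j _; rewrite sum_pair.
Qed.

(* [(f1 + f2) / 2 - f3 / n] is the orthogonal projector onto traceless symmetric
   matrices, a space of dimension [(n^2 + n) / 2 - 1]; [f4] is orthogonal to it. *)
Lemma gram_sqr_lower_bound : (2 <= n)%N ->
  Q ^+ 2 / ((n%:R ^+ 2 + n%:R) / 2 - 1) + al ^+ 2 * N / n%:R <=
  \sum_i \sum_j frob (Y i) (Y j) ^+ 2.
Proof.
move=> n_ge2; set D := (_ / 2 - 1).
have n_gt0 : 0 < n%:R :> R by rewrite ltr0n; apply: leq_trans n_ge2.
have n_ge2' : 2 <= n%:R :> R by rewrite (ler_nat R 2 n).
have D_gt0 : 0 < D by rewrite /D; nra.
set a := Q / D; set b := al / n%:R.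
pose X p := a / 2 * f1 p + a / 2 * f2 p + - (a / n%:R) * f3 p + b * f4 p.
have dotXl g : dotf X g =
    a / 2 * dotf f1 g + a / 2 * dotf f2 g + - (a / n%:R) * dotf f3 g + b * dotf f4 g.
  exact: dotf_comb4.
have dotXr g : dotf g X =
    a / 2 * dotf g f1 + a / 2 * dotf g f2 + - (a / n%:R) * dotf g f3 + b * dotf g f4.
  by rewrite dotfC dotXl !(dotfC g).
have := dotf_bessel z X; rewrite -dotzz; apply: le_trans.
rewrite dotXr dotXl !dotXr dotz1 dotz2 dotz3 dotz4.
rewrite !(dotfC f2 f1) !(dotfC f3 f1) !(dotfC f4 f1) !(dotfC f3 f2) !(dotfC f4 f2) !(dotfC f4 f3).
rewrite dot11 dot12 dot13 dot14 dot22 dot23 dot24 dot33 dot34 dot44.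
rewrite le_eqVlt; apply/orP; left; apply/eqP.
rewrite /a /b /D; field.
by rewrite gt_eqF //=; apply/eqP; nra.
Qed.

End GramBound.

(** * The linear programming bound *)

Definition lp_threshold (R : realFieldType) (m n : nat) : R :=
  m%:R ^+ 2 / n%:R + 2 * (n%:R - m%:R) ^+ 2 / (n%:R * (n%:R - 1) * (n%:R + 2)).
Arguments lp_threshold {R}.

Section ProjectionCode.
Variables (R : realFieldType) (n k m : nat) (P : 'I_k -> 'M[R]_n) (s : R).
Hypothesis n_ge2 : (2 <= n)%N.
Hypothesis PT : forall i, (P i)^T = P i.
Hypothesis PP : forall i, P i *m P i = P i.
Hypothesis trP : forall i, \tr (P i) = m%:R.
Hypothesis trPP : forall i j, i != j -> 0 <= \tr (P i *m P j) <= s.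

Let n_gt0 : 0 < n%:R :> R.
Proof. by rewrite ltr0n; apply: leq_trans n_ge2. Qed.

Let c := m%:R / n%:R : R.
Let mu := m%:R ^+ 2 / n%:R : R.
Let Y i := P i - c%:M.

Let Y_sym i : (Y i)^T = Y i.
Proof. by rewrite /Y linearB /= PT tr_scalar_mx. Qed.

Let Y_tr i : \tr (Y i) = 0.
Proof. by rewrite /Y raddfB /= trP mxtrace_scalar /c -[_ *+ n]mulr_natr divfK ?gt_eqF ?subrr. Qed.

Let Y_sqr i : Y i *m Y i = (1 - 2 * c) *: Y i + (c - c ^+ 2)%:M.
Proof.
rewrite /Y mulmxBl !mulmxBr PP mul_mx_scalar mul_scalar_mx -scalar_mxM.
by apply/matrixP => a b; rewrite !mxE; ring.
Qed.

Let trPP_frob i j : \tr (P i *m P j) = frob (Y i) (Y j) + mu.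
Proof.
have PY l : P l = Y l + c%:M by rewrite /Y subrK.
rewrite (PY i) (PY j) mulmxDl (mulmxDr (Y i)) (mulmxDr c%:M) mul_mx_scalar mul_scalar_mx -scalar_mxM.
rewrite !mxtraceD !mxtraceZ !Y_tr !mulr0 !addr0 mxtrace_scalar.
congr (_ + _); last by rewrite /mu /c add0r -[_ *+ n]mulr_natr; field; rewrite gt_eqF.
rewrite /mxtrace /frob; apply: eq_bigr => a _; rewrite [(Y i *m Y j) a a]mxE.
by apply: eq_bigr => b _; rewrite -[Y j in LHS]Y_sym [(Y j)^T b a]mxE.
Qed.

Let sum_frob : \sum_i \sum_j frob (Y i) (Y j) = frob (Ysum Y) (Ysum Y).
Proof.
transitivity (\sum_i \sum_j \sum_(x : 'I_n * 'I_n) Y i x.1 x.2 * Y j x.1 x.2).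
  by apply: eq_bigr => i _; apply: eq_bigr => j _; rewrite sum_pair.
rewrite (sum_gram (fun i (x : 'I_n * 'I_n) => Y i x.1 x.2)) sum_pair /frob.
by apply: eq_bigr => a _; apply: eq_bigr => b _; rewrite /Ysum summxE expr2.
Qed.

Let sum_frob_diag : \sum_i frob (Y i) (Y i) = k%:R * (m%:R - mu).
Proof.
transitivity (\sum_(i < k) (m%:R - mu)); last by rewrite sumr_const card_ord mulr_natl.
by apply: eq_bigr => i _; rewrite -(addrK mu (frob _ _)) -trPP_frob PP trP.
Qed.

(* Delsarte's linear programming bound with [F(t) = t (t - s)]: the
   off-diagonal values [F(tr(P_i P_j))] are nonpositive. *)
Let lp_upper : \sum_i \sum_j \tr (P i *m P j) * (\tr (P i *m P j) - s) <=
  k%:R * (m%:R * (m%:R - s)).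
Proof.
apply: (@le_trans _ _ (\sum_(i < k) m%:R * (m%:R - s))); last first.
  by rewrite sumr_const card_ord -[_ *+ k]mulr_natl.

apply: ler_sum => i _; rewrite (bigD1 i) //= PP trP gerDl; apply: sumr_le0 => j ji.
have ij : i != j by rewrite eq_sym.
by have /andP[tr_ge0 tr_le] := trPP ij; rewrite mulr_ge0_le0 // subr_le0.
Qed.

Let lp_expand : \sum_i \sum_j \tr (P i *m P j) * (\tr (P i *m P j) - s) =
  \sum_i \sum_j frob (Y i) (Y j) ^+ 2 + (2 * mu - s) * frob (Ysum Y) (Ysum Y)
  + k%:R ^+ 2 * (mu * (mu - s)).
Proof.
have sumk (x : R) : \sum_(j < k) x = k%:R * x by rewrite sumr_const card_ord mulr_natl.
transitivity (\sum_i (\sum_j frob (Y i) (Y j) ^+ 2 + (2 * mu - s) * \sum_j frob (Y i) (Y j)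
    + k%:R * (mu * (mu - s)))).
  apply: eq_bigr => i _; rewrite mulr_sumr -sumk -!big_split /=.
  by apply: eq_bigr => j _; rewrite trPP_frob; ring.
by rewrite !big_split /= -mulr_sumr sum_frob sumk expr2 mulrA.
Qed.

Lemma projection_code_bound : (0 < k)%N ->
  s <= (1 - 2 * c) ^+ 2 / n%:R + 2 * mu ->
  k%:R * mu * (lp_threshold m n - s) <= m%:R * (m%:R - s).
Proof.
move=> k_gt0 s_le.
set D := (n%:R ^+ 2 + n%:R) / 2 - 1 : R.
set N := frob (Ysum Y) (Ysum Y).
have n_ge2' : 2 <= n%:R :> R by rewrite (ler_nat R 2 n).
have QE : (k%:R * (m%:R - mu)) ^+ 2 / D =
    k%:R ^+ 2 * mu * (lp_threshold m n - mu).
  rewrite /D /mu /lp_threshold; field.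
  by apply/and4P; split; apply/eqP; nra.
have key := gram_sqr_lower_bound Y_sym Y_tr Y_sqr n_ge2.
rewrite sum_frob_diag -/D -/N QE [_ * N / _]mulrAC in key.
have up := lp_upper; rewrite lp_expand -/N in up.
have N_ge0 : 0 <= N by apply: sumr_ge0 => a _; apply: sumr_ge0 => b _; rewrite -expr2 sqr_ge0.
have : 0 <= ((1 - 2 * c) ^+ 2 / n%:R + 2 * mu - s) * N by rewrite mulr_ge0 // subr_ge0.
have k_gt0' : 0 < k%:R :> R by rewrite ltr0n.
move=> lp_ge0; rewrite -(ler_pM2l k_gt0').
by move: key up lp_ge0; lra.
Qed.

End ProjectionCode.

Lemma threshold_poly_ineq (R : realFieldType) (x y : R) : 1 <= x -> 2 * x <= y ->
  2 * (y - x) ^+ 2 * y ^+ 2 <= (x ^+ 2 * y ^+ 2 + (y - 2 * x) ^+ 2) * ((y - 1) * (y + 2)).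
Proof.
move=> x_ge1 xy; rewrite -subr_ge0; set d := y - 2 * x.
have -> : (x ^+ 2 * y ^+ 2 + d ^+ 2) * ((y - 1) * (y + 2)) - 2 * (y - x) ^+ 2 * y ^+ 2 =
    y ^+ 2 * (2 * x ^+ 2 * (2 * x ^+ 2 + x - 2) + x * d * (4 * x ^+ 2 + x - 4)
      + d ^+ 2 * (x ^+ 2 - 1)) + d ^+ 2 * (y - 2).
  by rewrite /d; ring.
have d_ge0 : 0 <= d by rewrite subr_ge0.
have x_ge0 : 0 <= x by apply: le_trans x_ge1.
have x2_ge1 : 1 <= x ^+ 2 by rewrite expr_ge1.
have t1 : 0 <= 2 * x ^+ 2 * (2 * x ^+ 2 + x - 2) by rewrite mulr_ge0 ?sqr_ge0 //; lra.
have t2 : 0 <= x * d * (4 * x ^+ 2 + x - 4) by rewrite !mulr_ge0 //; lra.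
have t3 : 0 <= d ^+ 2 * (x ^+ 2 - 1) by rewrite mulr_ge0 ?sqr_ge0 ?subr_ge0.
have t4 : 0 <= d ^+ 2 * (y - 2) by rewrite mulr_ge0 ?sqr_ge0 // subr_ge0; lra.
by rewrite addr_ge0 // mulr_ge0 ?sqr_ge0 // !addr_ge0.
Qed.

Section Threshold.
Variables (R : realFieldType) (m n : nat).
Hypotheses (m_ge1 : (1 <= m)%N) (mn : (2 * m <= n)%N).

Let nat_bounds : [/\ 1 <= m%:R :> R, 2 * m%:R <= n%:R :> R & 2 <= n%:R :> R].
Proof.
have x_ge1 : 1 <= m%:R :> R by rewrite (ler_nat R 1 m).
have xy : 2 * m%:R <= n%:R :> R by rewrite -(natrM R 2 m) ler_nat.
by split => //; lra.
Qed.

Lemma lp_threshold_le_proj :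
  lp_threshold m n <= (1 - 2 * (m%:R / n%:R)) ^+ 2 / n%:R + 2 * (m%:R ^+ 2 / n%:R) :> R.
Proof.
have [x_ge1 xy y_ge2] := nat_bounds.
rewrite -subr_ge0 /lp_threshold; set x := m%:R in x_ge1 xy *; set y := n%:R in xy y_ge2 *.
have -> : (1 - 2 * (x / y)) ^+ 2 / y + 2 * (x ^+ 2 / y) -
      (x ^+ 2 / y + 2 * (y - x) ^+ 2 / (y * (y - 1) * (y + 2))) =
    ((x ^+ 2 * y ^+ 2 + (y - 2 * x) ^+ 2) * ((y - 1) * (y + 2)) - 2 * (y - x) ^+ 2 * y ^+ 2)
      / (y ^+ 3 * ((y - 1) * (y + 2))).
  by field; apply/and3P; split; apply/eqP; nra.
rewrite divr_ge0 ?subr_ge0 ?threshold_poly_ineq //.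
by rewrite mulr_ge0 ?exprn_ge0 //; nra.
Qed.

Lemma lp_threshold_le : lp_threshold m n <= m%:R :> R.
Proof.
have [x_ge1 xy y_ge2] := nat_bounds.
rewrite /lp_threshold; set x := m%:R in x_ge1 xy *; set y := n%:R in xy y_ge2 *.
have y_gt0 : 0 < y by lra.
have den_gt0 : 0 < y * (y - 1) * (y + 2) by rewrite !mulr_gt0 //; lra.
have mu_le : x ^+ 2 / y <= x / 2.
  by rewrite ler_pdivrMr // mulrAC ler_pdivlMr //; nra.
have rest_le : 2 * (y - x) ^+ 2 / (y * (y - 1) * (y + 2)) <= 1 / 2.
  rewrite ler_pdivrMr // mulrAC ler_pdivlMr //.
  have : (y - x) ^+ 2 <= (y - 1) ^+ 2 by nra.
  nra.
lra.
Qed.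

Lemma lp_bound_single (s : R) : s < lp_threshold m n ->
  m%:R ^+ 2 / n%:R * (lp_threshold m n - s) <= m%:R * (m%:R - s).
Proof.
move=> s_lt; have A_le := lp_threshold_le; have [x_ge1 xy y_ge2] := nat_bounds.
have mu_le : m%:R ^+ 2 / n%:R <= m%:R :> R.
  rewrite ler_pdivrMr ?expr2; last by lra.
  have : 0 <= m%:R * (n%:R - m%:R) :> R by rewrite mulr_ge0 //; lra.
  lra.
apply: ler_pM => //; last by rewrite lerD2r.
  by rewrite divr_ge0 ?sqr_ge0.
by rewrite subr_ge0 ltW.
Qed.

Lemma lp_bound_size (K s : R) : s < lp_threshold m n ->
  K * (m%:R ^+ 2 / n%:R) * (lp_threshold m n - s) <= m%:R * (m%:R - s) ->
  K <= n%:R / m%:R * ((m%:R - s) / (- s + lp_threshold m n)).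
Proof.
move=> s_lt lp; have [x_ge1 xy y_ge2] := nat_bounds.
have mu_gt0 : 0 < m%:R ^+ 2 / n%:R :> R by rewrite divr_gt0 ?exprn_gt0; lra.
have -> : n%:R / m%:R * ((m%:R - s) / (- s + lp_threshold m n)) =
    m%:R * (m%:R - s) / (m%:R ^+ 2 / n%:R * (lp_threshold m n - s)).
  by field; rewrite !gt_eqF //=; lra.
have den_gt0 : 0 < m%:R ^+ 2 / n%:R * (lp_threshold m n - s) by rewrite mulr_gt0 // subr_gt0.
by rewrite ler_pdivlMr // mulrA.
Qed.

End Threshold.

Theorem theorem3p1 (R : realType) (m n : nat) (delta : R)
  (hm1 : (1 <= m)%N) (hmn : (2 * m <= n)%N) (hdelta : 0 < delta)
  (hs0 : 0 < m%:R - delta ^+ 2)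
  (hs1 : m%:R - delta ^+ 2 < (m%:R ^+ 2 / n%:R
          + 2 * (n%:R - m%:R) ^+ 2 / (n%:R * (n%:R - 1) * (n%:R + 2))))
  (k : nat) (C : 'I_k -> 'M[R]_n) :
  delta_code m delta C ->
  k%:R <= n%:R / m%:R * ((m%:R - (m%:R - delta ^+ 2)) /
            (- (m%:R - delta ^+ 2) + m%:R ^+ 2 / n%:R
             + 2 * (n%:R - m%:R) ^+ 2 / (n%:R * (n%:R - 1) * (n%:R + 2)))).
Proof.
move=> Ccode; set s := m%:R - delta ^+ 2 in hs0 hs1 *.
have s_lt : s < lp_threshold m n := hs1.
rewrite -addrA; apply: (lp_bound_size hm1 hmn s_lt).
have [k_le1|k_ge2] := leqP k 1.
  apply: le_trans (lp_bound_single hm1 hmn s_lt).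
  rewrite -mulrA -[X in _ <= X]mul1r ler_wpM2r ?(ler_nat R k 1) //.
  by rewrite mulr_ge0 ?divr_ge0 ?sqr_ge0 // subr_ge0 ltW.
have [P [CP trP trPP]] := delta_code_orthoproj k_ge2 hdelta Ccode.
have n_ge2 : (2 <= n)%N by apply: leq_trans hmn; rewrite leq_pmulr.
have PT i : (P i)^T = P i by case: (CP i).
have PP i : P i *m P i = P i by apply: orthoproj_idem (CP i).
apply: (projection_code_bound n_ge2 PT PP trP trPP); first exact: ltnW.
exact: le_trans (ltW s_lt) (lp_threshold_le_proj _ hm1 hmn).
Qed.
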